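(* Suppose that every first countable, hereditarily Lindel\''of, regular space is hereditarily separable. Then every locally compact, perfectly normal space is locally separable (every point has a separable neighbourhood).
   Context: A space is perfectly normal if it is normal and every closed set is a $G_\delta$. Hereditarily Lindel\''of (resp. hereditarily separable) means every subspace is Lindel\''of (resp. separable). *)

From HB Require Import structures.
From mathcomp Require Import all_boot all_order all_algebra.
From mathcomp Require Import all_classical all_reals all_analysis.
From mathcomp Require Import borel_hierarchy.
Set Implicit Arguments. Unset Strict Implicit. Unset Printing Implicit Defensive.
Local Open Scope classical_set_scope.

Section Defs.
Context {T : topologicalType}.

Definition first_countable_space : Prop :=
  forall x : T, exists B : nat -> set T,
    (forall n, nbhs x (B n)) /\ (forall U, nbhs x U -> exists n, B n `<=` U).

(* A (with the subspace topology) is Lindelof: every cover of A by open sets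
   of T has a countable subcover *)
Definition lindelof_set (A : set T) : Prop :=
  forall C : set (set T), (forall U, C U -> open U) ->
    A `<=` \bigcup_(U in C) U ->
    exists D : set (set T), [/\ D `<=` C, countable D & A `<=` \bigcup_(U in D) U].

Definition hereditarily_lindelof : Prop := forall A : set T, lindelof_set A.

(* A (with the subspace topology) is separable: A has a countable subset
   dense in A *)
Definition separable_set (A : set T) : Prop :=
  exists D : set T, [/\ D `<=` A, countable D & A `<=` closure D].

Definition hereditarily_separable : Prop := forall A : set T, separable_set A.

Definition perfectly_normal : Prop :=
  normal_space T /\ (forall F : set T, closed F -> Gdelta F).

Definition locally_compact_space : Prop :=
  forall x : T, exists K : set T, nbhs x K /\ compact K.

Definition locally_separable : Prop :=
  forall x : T, exists N : set T, nbhs x N /\ separable_set N.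

End Defs.

From HB Require Import structures.
From mathcomp Require Import all_boot finmap all_classical all_analysis borel_hierarchy.

(* Let K be a compact neighbourhood of x; it suffices to check that K, with the
   subspace topology, satisfies the three hypotheses.
   Regularity is inherited from Y.  Y is regular because it is normal and,
   closed sets being G_delta, the closure of a point lies in every open set
   around it.
   First countability: write closure {y} as the intersection of open sets G_n
   and shrink them, by normality, to nested neighbourhoods B_n of y with
   closure B_n inside G_n; by compactness of K, every open V around y already
   contains K /\ closure B_n for some n.
   Hereditary Lindelofness: every open set of Y is the union of the closed sets
   complementary to the G_n of its complement, so its trace on K is
   sigma-compact, and any open cover of it has a countable subcover. *)

Local Open Scope classical_set_scope.

Definition pointed_at {T : Type} (t : T) : Type := T.
HB.instance Definition _ (T : topologicalType) (t : T) :=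
  Topological.on (pointed_at t).
HB.instance Definition _ (T : topologicalType) (t : T) :=
  isPointed.Build (pointed_at t) t.

(* The library proves [compact_cover] for pointed spaces only; a nonempty set
   provides the point. *)
Lemma compact_cover_compact {T : topologicalType} {A : set T} :
  compact A -> cover_compact A.
Proof.
move=> cA I D f fo Af.
have [[t At]|nA] := pselect (exists t, A t); last first.
  by exists fset0 => // z Az; exfalso; apply: nA; exists z.
by move: (cA : @compact (pointed_at t) A); rewrite compact_cover; apply.
Qed.

Lemma compact_nonincreasing_closed_sub_open {T : topologicalType}
    (K V : set T) (F : nat -> set T) :
  compact K -> open V -> (forall n, closed (F n)) ->
  (forall m n, (m <= n)%N -> F n `<=` F m) -> \bigcap_n F n `<=` V ->
  exists m, K `&` F m `<=` V.
Proof.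
move=> cK oV cF decF FV.
pose W n := if n is m.+1 then ~` F m else V.
have oW i : [set: nat] i -> open (W i).
  by case: i => [|m] _ //=; exact/closed_openC.
have KW : K `<=` cover [set: nat] W.
  move=> z Kz; have [Vz|nVz] := pselect (V z); first by exists 0%N.
  have [m nFm] : exists m, ~ F m z.
    apply: contrapT => allF; apply/nVz/FV => n _.
    by apply: contrapT => nFn; apply: allF; exists n.
  by exists m.+1.
have [D _ DW] := compact_cover_compact cK _ _ _ oW KW.
exists (\max_(i <- D) i)%N => z [Kz FDz].
have [[|m] Dm] := DW z Kz; rewrite /W => Wz //.
have mD : (m <= \max_(i <- D) i)%N.
  exact/ltnW/(@leq_bigmax_seq _ _ xpredT id m.+1 Dm).
by case: Wz; exact: decF mD _ FDz.
Qed.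

Lemma continuous_closure_image {S T : topologicalType} {f : S -> T}
    {E : set S} :
  continuous f -> f @` closure E `<=` closure (f @` E).
Proof.
move=> cf _ [q clEq <-] B /(cf q) /clEq [r [Er Br]].
by exists (f r); split => //; exists r.
Qed.

Section closed_Gdelta.
Context {T : topologicalType}.
Hypothesis closed_Gdelta : forall F : set T, closed F -> Gdelta F.

Lemma closure_set1_subset_open {U : set T} {y : T} :
  open U -> U y -> closure [set y] `<=` U.
Proof.
move=> oU Uy z clyz; apply: contrapT => nUz.
have [G oG UCE] := closed_Gdelta _ (open_closedC oU).
suff : (~` U) y by [].
rewrite UCE => n _.
have : (~` U) z := nUz; rewrite UCE => /(_ n I) Gnz.
by have [_ [-> //]] := clyz (G n) (open_nbhs_nbhs (conj (oG n) Gnz)).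
Qed.

Lemma closed_Gdelta_normal_regular : normal_space T -> regular_space T.
Proof.
move=> nT y U; rewrite {1}nbhsE => -[W [oW Wy] WU].
have WN : set_nbhs (closure [set y]) W.
  by move=> z /(closure_set1_subset_open oW Wy) Wz; exact: open_nbhs_nbhs.
have [C CN clCW] := nT _ (@closed_closure _ [set y]) W WN.
by exists C; [apply: CN; exact: subset_closure | exact: subset_trans WU].
Qed.

Lemma closure_set1_nbhs_seq (y : T) : normal_space T ->
  exists B : nat -> set T, [/\ forall n, nbhs y (B n),
    forall m n, (m <= n)%N -> B n `<=` B m &
    \bigcap_n closure (B n) `<=` closure [set y]].
Proof.
move=> nT.
have [G oG clyE] := closed_Gdelta _ (@closed_closure _ [set y]).
have Gny n : nbhs y (G n).
  apply: open_nbhs_nbhs; split => //.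
  have : closure [set y] y by exact: subset_closure.
  by rewrite clyE; apply.
have shrink n : exists C, nbhs y C /\ closure C `<=` G n.
  by have [C] := closed_Gdelta_normal_regular nT _ _ (Gny n); exists C.
have [C hC] := choice shrink.
exists (fun n => \bigcap_(i in `I_n.+1) C i); split.
- elim=> [|n IH].
    apply: filterS (hC 0%N).1 => z C0z i.
    by rewrite /= ltnS leqn0 => /eqP ->.
  apply: filterS (filterI IH (hC n.+1).1) => z [Bz Cz] i.
  by rewrite /= ltnS leq_eqVlt => /orP[/eqP -> //|]; exact: Bz.
- by move=> m n mn z Bz i im; apply: Bz; exact: leq_trans im _.
- move=> z Bz; rewrite clyE => n _; apply: (hC n).2.
  by move: (Bz n I); apply: closureS => w Bw; exact: Bw n (ltnSn n).
Qed.

Lemma compact_countable_subcover {K : set T} {I : choiceType} {C : set I}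
    {f : I -> set T} :
  compact K -> (forall i, C i -> open (f i)) ->
  exists D : set I, [/\ D `<=` C, countable D &
    K `&` \bigcup_(i in C) f i `<=` \bigcup_(i in D) f i].
Proof.
move=> cK oF.
have oV : open (\bigcup_(i in C) f i) by exact: bigcup_open oF.
have [G oG VCE] := closed_Gdelta _ (open_closedC oV).
have cover_n n : exists D : {fset I},
    {subset D <= C} /\ K `&` ~` G n `<=` cover [set` D] f.
  have cKn := compact_closedI cK (open_closedC (oG n)).
  have KnC : K `&` ~` G n `<=` cover C f.
    move=> z [Kz nGz]; apply: contrapT => nVz; apply: nGz.
    have : (~` \bigcup_(i in C) f i) z := nVz.
    by rewrite VCE; apply.
  by have [D DC KnD] := compact_cover_compact cKn _ _ _ oF KnC; exists D.
have [Dn hDn] := choice cover_n.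
exists (\bigcup_n [set` Dn n]); split.
- by move=> i [n _ Dni]; move: ((hDn n).1 i Dni); rewrite inE.
- apply: bigcup_countable; first exact: card_lexx.
  by move=> n _; exact: countable_fset.
- move=> z [Kz Vz].
  have [n nGnz] : exists n, ~ G n z.
    apply: contrapT => allG; have : (~` (\bigcup_(i in C) f i)) z; last by [].
    by rewrite VCE => n _; apply: contrapT => nG; apply: allG; exists n.
  have [i Dni fiz] := (hDn n).2 z (conj Kz nGnz).
  by exists i => //; exists n.
Qed.

End closed_Gdelta.

Section set_type_topology.
Context {Y : topologicalType} (K : set Y).
Local Notation v := (@set_val Y K).

Lemma set_val_continuous : continuous v.
Proof. exact: initial_continuous. Qed.

Lemma nbhs_set_typeP (p : set_type K) (U : set (set_type K)) :
  nbhs p U -> exists V : set Y, [/\ open V, V (v p) & v @^-1` V `<=` U].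
Proof.
rewrite nbhsE => -[B [[V oV VB] Bp] BU].
by exists V; split => //; [rewrite -VB in Bp|rewrite VB].
Qed.

Lemma regular_set_type : regular_space Y -> regular_space (set_type K).
Proof.
move=> rY p U /nbhs_set_typeP [V [oV Vp VU]].
have [C nC clCV] := rY (v p) V (open_nbhs_nbhs (conj oV Vp)).
exists (v @^-1` C); first exact: set_val_continuous.
move=> q clq; apply/VU/clCV.
have := continuous_closure_image set_val_continuous _ (imageP v clq).
by apply: closureS => _ [r Cr <-].
Qed.

Lemma separable_set_val :
  separable_set [set: set_type K] -> separable_set K.
Proof.
move=> [D [_ cD DT]]; exists (v @` D); split.
- by move=> _ [q _ <-]; exact: set_valP.
- exact: card_le_trans (card_image_le _ D) cD.
- move=> z Kz; have := DT (exist _ z (mem_set Kz)) I.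
  by move=> /(imageP v) /(continuous_closure_image set_val_continuous).
Qed.

Hypothesis normalY : normal_space Y.
Hypothesis closed_GdeltaY : forall F : set Y, closed F -> Gdelta F.
Hypothesis compactK : compact K.

Lemma set_type_first_countable : @first_countable_space (set_type K).
Proof.
move=> p.
have [B [nB decB clB]] := closure_set1_nbhs_seq closed_GdeltaY (v p) normalY.
exists (fun n => v @^-1` B n); split.
  by move=> n; exact: set_val_continuous.
move=> U /nbhs_set_typeP [V [oV Vp VU]].
have [m KBV] : exists m, K `&` closure (B m) `<=` V.
  apply: compact_nonincreasing_closed_sub_open => //.
  - by move=> n; exact: closed_closure.
  - by move=> m n mn; apply: closureS; exact: decB.
  - exact: subset_trans clB (closure_set1_subset_open closed_GdeltaY oV Vp).
exists m => q Bq; apply/VU/KBV; split; [exact: set_valP|exact: subset_closure].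
Qed.

Lemma set_type_hereditarily_lindelof : @hereditarily_lindelof (set_type K).
Proof.
move=> A C oC AC.
(* [g U] is the largest open set of [Y] whose trace on [K] is [U]. *)
pose g (U : set (set_type K)) :=
  \bigcup_(V in [set V | open V /\ v @^-1` V = U]) V.
have og U : C U -> open (g U) by move=> _; apply: bigcup_open => V [].
have gK U q : g U (v q) -> U q by move=> [V [_ <-]].
have [D [DC cD KD]] := compact_countable_subcover closed_GdeltaY compactK og.
exists D; split => // a Aa; have [U CU Ua] := AC a Aa.
have gUa : g U (v a).
  by have [V oV VU] := oC U CU; exists V => //; rewrite -VU in Ua.
have [U' DU' gU'a] := KD (v a) (conj (set_valP a) (ex_intro2 _ _ U CU gUa)).
by exists U' => //; exact: gK.
Qed.

End set_type_topology.

Theorem lemma10 :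
  (forall X : topologicalType,
      @first_countable_space X -> @hereditarily_lindelof X -> regular_space X ->
      @hereditarily_separable X) ->
  forall Y : topologicalType,
    @locally_compact_space Y -> @perfectly_normal Y -> @locally_separable Y.
Proof.
move=> hsep Y lcY [normalY closed_GdeltaY] x.
have [K [Kx cK]] := lcY x.
exists K; split => //; apply: separable_set_val; apply: hsep.
- exact: set_type_first_countable.
- exact: set_type_hereditarily_lindelof.
- exact/regular_set_type/closed_Gdelta_normal_regular.
Qed.
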